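(* Suppose $\|\mu_a\|_\infty,\|\widehat\mu_a\|_\infty\le B<\infty$ a.s. for all $a$, and $\mathbb{P}$ satisfies the margin condition with some $\kappa>0$, $\alpha>0$. Let $C^*\in\mathcal{C}_k^*$ and $f_{C}(x)=\|x-\Pi_C(x)\|_2^2$. Then $$\big|\mathbb{P}\{f_{C^*}(\widehat\mu)-f_{C^*}(\mu)\}\big|\lesssim\max_a\|\widehat\mu_a-\mu_a\|_{\mathbb{P},1}+\max_a\|\widehat\mu_a-\mu_a\|_\infty^{\alpha+1}+\frac1\kappa\max_a\big(\|\widehat\mu_a-\mu_a\|_\infty\|\widehat\mu_a-\mu_a\|_{\mathbb{P},1}\big).$$
   Context: $Z=(Y,A,X)\sim\mathbb{P}$, $A\in\mathcal{A}=\{1,\dots,p\}$; $\mu_a(X)=\mathbb{E}(Y\mid X,A=a)$, $\mu=(\mu_1(X),\dots,\mu_p(X))^\top$, $\widehat\mu$ an estimator of $\mu$ held fixed under $\mathbb{P}$ (i.e. $\mathbb{P}\{g(\widehat\mu)\}=\int g(\widehat\mu(x))d\mathbb{P}$). Codebooks $C=\{c_1,\dots,c_k\}\subset\mathbb{R}^p$; $\mathcal{C}_k$ those of size $k$ in the image of $\mu$; $\Pi_C(x)=\arg\min_{c\in C}\|c-x\|_2^2$; $R(C)=\mathbb{E}\|\mu-\Pi_C(\mu)\|_2^2$; $\mathcal{C}_k^*$ its minimizers. $V_j(C^* )=\{x:\|x-c_j^*\|_2\le\|x-c_i^*\|_2\ \forall i\ne j\}$; $N_{C^*}(t)=\bigcup_j\{x\in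 V_j(C^* ):|\,\|x-c_j^*\|_2-\min_{i\ne j}\|x-c_i^*\|_2\,|\le t\}$; margin condition (radius $\kappa$, rate $\alpha$): for $0\le t\le\kappa$, $\sup_{C^*\in\mathcal{C}_k^*}\mathbb{P}(\mu\in N_{C^*}(t))\lesssim t^\alpha$. $\|f\|_{\mathbb{P},1}=\int|f|d\mathbb{P}$, $\|\cdot\|_\infty$ sup norm; $\lesssim$ inequality up to a multiplicative constant. *)

From HB Require Import structures.
From mathcomp Require Import all_boot all_order all_algebra.
From mathcomp Require Import all_classical all_reals all_analysis ess_sup_inf.
Set Implicit Arguments. Unset Strict Implicit. Unset Printing Implicit Defensive.
Import Order.TTheory GRing.Theory Num.Theory.
Import numFieldNormedType.Exports.
Local Open Scope classical_set_scope.
Local Open Scope ring_scope.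

Section Defs.
Context {R : realType} {p k : nat}.

Definition vecf {T : Type} (m : 'I_p -> T -> R) (x : T) : 'rV[R]_p :=
  \row_(a < p) m a x.

Definition dist2 (x c : 'rV[R]_p) : R := \sum_(i < p) (x 0 i - c 0 i) ^+ 2.
Definition dist (x c : 'rV[R]_p) : R := Num.sqrt (dist2 x c).

Definition codebook := 'I_k -> 'rV[R]_p.

(* f_C(x) = ||x - Pi_C(x)||_2^2 = min_{c in C} ||x - c||_2^2
   (independent of tie-breaking in the argmin); for k = 0 it is 0. *)
Definition fC (C : codebook) (x : 'rV[R]_p) : R :=
  fine (\big[mine/+oo%E]_(j < k) (dist2 x (C j))%:E).

Context {d : measure_display} {T : measurableType d} (P : probability T R).

Definition in_Ck (mu : 'I_p -> T -> R) (C : codebook) : Prop :=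
  injective C /\ forall j, exists x, C j = vecf mu x.

Definition risk (mu : 'I_p -> T -> R) (C : codebook) : \bar R :=
  (\int[P]_x (fC C (vecf mu x))%:E)%E.

Definition optimal (mu : 'I_p -> T -> R) (C : codebook) : Prop :=
  in_Ck mu C /\ forall C', in_Ck mu C' -> (risk mu C <= risk mu C')%E.

Definition voronoi (C : codebook) (j : 'I_k) : set 'rV[R]_p :=
  [set x | forall i, i != j -> dist x (C j) <= dist x (C i)].

Definition margin_set (C : codebook) (t : R) : set 'rV[R]_p :=
  [set x | exists j, voronoi C j x /\
     (`| (dist x (C j))%:E - \big[mine/+oo%E]_(i < k | i != j) (dist x (C i))%:E |
       <= t%:E)%E].

(* margin condition with radius kappa, rate alpha, and constant cm
   (the constant hidden in \lesssim) *)
Definition margin_condition (mu : 'I_p -> T -> R) (kappa alpha cm : R) : Prop :=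
  forall t, 0 <= t <= kappa -> forall C, optimal mu C ->
    (P [set x | margin_set C t (vecf mu x)] <= (cm * t `^ alpha)%:E)%E.

Definition L1norm (f : T -> R) : \bar R := (\int[P]_x `|f x|%:E)%E.
Definition Linfnorm (f : T -> R) : \bar R := ess_sup P (fun x => `|f x|%:E).

End Defs.

From HB Require Import structures.
From mathcomp Require Import all_boot all_order all_algebra.
From mathcomp Require Import all_classical all_reals all_analysis measurable_realfun.
From mathcomp Require Import ring lra.
Import Order.TTheory GRing.Theory Num.Theory.
Import numFieldNormedType.Exports.
Local Open Scope classical_set_scope.
Local Open Scope ring_scope.

(* The centers of an optimal codebook lie in the image of mu, which is bounded
   only almost surely, but optimality keeps one of them near the box
   |x_a| <= |B|: swapping a center for a point of the a.s. range of mu gives a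
   codebook of risk at most p (2|B|)^2, so the optimal risk is no larger and some
   point of the a.s. range of mu has a center within squared distance
   p (2|B|)^2 + 1.  On the box, f_C is then Lipschitz for the l1 distance with a
   constant depending on |B| and p only, and integrating this bound controls
   the left-hand side by the L1 term alone: the other two terms are
   nonnegative. *)

Lemma normr_le_1_sqr {R : realDomainType} (r : R) : `|r| <= 1 + r ^+ 2.
Proof.
by rewrite -real_normK ?num_real //; have := normr_ge0 r; move: `|r| => t; nra.
Qed.

Section Quantizer.
Context {R : realType} {p k : nat}.
Implicit Types (x y z c : 'rV[R]_p) (C : @codebook R p k).

Lemma dist2_ge0 x c : 0 <= dist2 x c.
Proof. by rewrite sumr_ge0 // => i _; rewrite sqr_ge0. Qed.

Lemma sqr_coord_le_dist2 x c i : (x 0 i - c 0 i) ^+ 2 <= dist2 x c.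
Proof. by rewrite /dist2 (bigD1 i) //= lerDl sumr_ge0 // => j _; rewrite sqr_ge0. Qed.

Lemma dist2_le_box x c (M : R) :
  (forall i, `|x 0 i - c 0 i| <= M) -> dist2 x c <= p%:R * M ^+ 2.
Proof.
move=> xcM; apply: le_trans (_ : \sum_(i < p) M ^+ 2 <= _); last first.
  by rewrite sumr_const card_ord mulr_natl.
apply: ler_sum => i _; rewrite -real_normK ?num_real // lerXn2r ?nnegrE //.
exact: le_trans (xcM i).
Qed.

Lemma dist2_subr_le x y c (L : R) :
  (forall i, `|y 0 i - x 0 i + 2 * (x 0 i - c 0 i)| <= L) ->
  dist2 y c - dist2 x c <= L * \sum_(i < p) `|y 0 i - x 0 i|.
Proof.
move=> hL; rewrite /dist2 -sumrB mulr_sumr; apply: ler_sum => i _.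
have -> : (y 0 i - c 0 i) ^+ 2 - (x 0 i - c 0 i) ^+ 2
    = (y 0 i - x 0 i) * (y 0 i - x 0 i + 2 * (x 0 i - c 0 i)) by ring.
by rewrite (le_trans (ler_norm _)) // normrM mulrC ler_wpM2r.
Qed.

Lemma fC_ord0 C z : k = 0%N -> fC C z = 0.
Proof.
by move=> k0; rewrite /fC big1 // => -[i i_lt_k]; have : (i < 0)%N by rewrite -k0.
Qed.

Lemma fC_nearest C z : (0 < k)%N -> exists j, fC C z = dist2 z (C j).
Proof.
move=> k_gt0; rewrite /fC.
have [j _ ->] := @eq_bigmin _ _ _ +oo%E (Ordinal k_gt0) xpredT
  (fun j => (dist2 z (C j))%:E) isT (fun _ _ => leey _).
by exists j.
Qed.

Lemma fC_le_dist2 C z j : fC C z <= dist2 z (C j).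
Proof.
have [i _ min_i] := @eq_bigmin _ _ _ +oo%E j xpredT
  (fun j => (dist2 z (C j))%:E) isT (fun _ _ => leey _).
by rewrite /fC min_i -lee_fin -min_i; apply: bigmin_le.
Qed.

Lemma fC_ge0 C z : 0 <= fC C z.
Proof.
have [k0|k_gt0] := posnP k; first by rewrite fC_ord0.
by have [j ->] := fC_nearest C z k_gt0; apply: dist2_ge0.
Qed.

Lemma fC_le_box C j z (M r : R) :
  (forall i, `|C j 0 i| <= r) -> (forall i, `|z 0 i| <= M) ->
  fC C z <= p%:R * (M + r) ^+ 2.
Proof.
move=> Cr zM; apply: le_trans (fC_le_dist2 C z j) _; apply: dist2_le_box => i.
by apply: le_trans (ler_normB _ _) _; apply: lerD.
Qed.

Lemma fC_subr_le C x y (M D : R) : (0 < k)%N ->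
  (forall i, `|x 0 i| <= M) -> (forall i, `|y 0 i| <= M) -> fC C x <= D ->
  fC C y - fC C x <= (2 * M + 2 * (1 + D)) * \sum_(i < p) `|y 0 i - x 0 i|.
Proof.
move=> k_gt0 xM yM xD; have [j xj] := fC_nearest C x k_gt0.
apply: le_trans (_ : _ <= dist2 y (C j) - dist2 x (C j)) _.
  by rewrite xj lerD2r fC_le_dist2.
apply: dist2_subr_le => i; apply: le_trans (ler_normD _ _) _.
have yx : `|y 0 i - x 0 i| <= 2 * M.
  by apply: le_trans (ler_normB _ _) _; have := xM i; have := yM i; lra.
have xc : `|x 0 i - C j 0 i| <= 1 + D.
  apply: le_trans (normr_le_1_sqr _) _.
  by rewrite lerD2l (le_trans (sqr_coord_le_dist2 _ _ i)) -?xj.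
by rewrite normrM ger0_norm //; lra.
Qed.

Lemma fC_lipschitz C x y (M D : R) : (0 < k)%N ->
  (forall i, `|x 0 i| <= M) -> (forall i, `|y 0 i| <= M) ->
  fC C x <= D -> fC C y <= D ->
  `|fC C y - fC C x| <= (2 * M + 2 * (1 + D)) * \sum_(i < p) `|y 0 i - x 0 i|.
Proof.
move=> k_gt0 xM yM xD yD; rewrite ler_norml; apply/andP; split.
  rewrite lerNl opprB; under eq_bigr => i _ do rewrite distrC.
  exact: fC_subr_le.
exact: fC_subr_le.
Qed.

End Quantizer.

Definition center_radius {R : realType} (p : nat) (M : R) : R :=
  M + 2 + p%:R * (2 * M) ^+ 2.

Definition fC_lipschitz_const {R : realType} (p : nat) (M : R) : R :=
  2 * M + 2 * (1 + p%:R * (M + center_radius p M) ^+ 2).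

Lemma fC_lipschitz_const_ge0 {R : realType} (p : nat) (M : R) :
  0 <= M -> 0 <= fC_lipschitz_const p M.
Proof.
move=> M_ge0; rewrite /fC_lipschitz_const addr_ge0 ?mulr_ge0 ?addr_ge0 //.
by rewrite mulr_ge0 ?sqr_ge0.
Qed.

Section Probability.
Context {R : realType} {d : measure_display} {T : measurableType d}.
Variable P : probability T R.

Lemma probability_integral_cst (r : R) : (\int[P]_x r%:E = r%:E)%E.
Proof. by rewrite integral_cst //= probability_setT mule1. Qed.

Lemma ae_exists {Q : T -> Prop} : {ae P, forall x, Q x} -> exists x, Q x.
Proof.
case=> N [mN PN0 notQ_N]; apply: contrapT => noQ.
suff : P setT = 0%E by rewrite probability_setT => /eqP; rewrite eqe oner_eq0.
apply/eqP; rewrite eq_le measure_ge0 andbT -PN0 le_measure ?inE //.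
by move=> x _; apply: notQ_N => Qx; apply: noQ; exists x.
Qed.

Lemma integral_le_ae_bound (f : T -> R) (E : R) :
  measurable_fun setT f -> (forall x, 0 <= f x) -> 0 <= E ->
  {ae P, forall x, f x <= E} -> (\int[P]_x (f x)%:E <= E%:E)%E.
Proof.
move=> mf f0 E0 fE; rewrite -probability_integral_cst.
apply: ae_ge0_le_integral => //; first by move=> x _; rewrite lee_fin.
- exact/measurable_EFinP.
- by apply: filterS fE => x fxE _; rewrite lee_fin.
Qed.

Lemma ae_witness_integral_lt (f : T -> R) (Q : T -> Prop) (E : R) :
  {ae P, forall x, Q x} -> measurable_fun setT f -> (forall x, 0 <= f x) ->
  0 <= E -> (\int[P]_x (f x)%:E < E%:E)%E ->
  exists x, Q x /\ f x < E.
Proof.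
move=> aeQ mf f0 E0 intf_lt; apply: contrapT => no_witness.
suff : (E%:E <= \int[P]_x (f x)%:E)%E by rewrite leNgt intf_lt.
rewrite -probability_integral_cst; apply: ae_ge0_le_integral => //.
- by move=> x _; rewrite lee_fin.
- exact/measurable_EFinP.
apply: filterS aeQ => x Qx _; rewrite lee_fin leNgt; apply/negP => fxE.
by apply: no_witness; exists x.
Qed.

Lemma measurable_dist2_vecf {p : nat} (m : 'I_p -> T -> R) c :
  (forall a, measurable_fun setT (m a)) ->
  measurable_fun setT (fun x => dist2 (vecf m x) c).
Proof.
move=> mm; rewrite /dist2; under eq_fun do under eq_bigr do rewrite mxE.
apply: measurable_sum => i; apply: measurable_funX.
by apply: measurable_funB => //; apply: measurable_cst.
Qed.

Lemma measurable_fC_vecf {p k : nat} (m : 'I_p -> T -> R) (C : @codebook R p k) :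
  (forall a, measurable_fun setT (m a)) ->
  measurable_fun setT (fun x => fC C (vecf m x)).
Proof.
move=> mm; apply: (measurableT_comp (fine_measurable _)) => //.
rewrite /fC; elim: (index_enum _) => [|j s IHs].
  by under eq_fun do rewrite big_nil; apply: measurable_cst.
under eq_fun do rewrite big_cons; apply: measurable_mine => //.
exact/measurable_EFinP/measurable_dist2_vecf.
Qed.

Lemma abse_integral_subr_le (n : nat) (f g : T -> R) (h : 'I_n -> T -> R) (L : R) :
  measurable_fun setT f -> measurable_fun setT g ->
  (forall a, measurable_fun setT (h a)) -> 0 <= L ->
  {ae P, forall x, `|f x - g x| <= L * \sum_(a < n) `|h a x|} ->
  (`|\int[P]_x ((f x)%:E - (g x)%:E)|
     <= (L * n%:R)%:E * \big[maxe/0]_(a < n) L1norm P (h a))%E.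
Proof.
move=> mf mg mh L_ge0 fg_le.
have mabs_h a : measurable_fun setT (fun x => `|h a x|) by apply: measurableT_comp.
have mfg : measurable_fun setT (fun x => `|f x - g x|).
  by apply: measurableT_comp => //; apply: measurable_funB.
under eq_integral => x _ do rewrite -EFinB.
apply: le_trans (le_abse_integral P measurableT _) _.
  by apply/measurable_EFinP; apply: measurable_funB.
under eq_integral => x _ do rewrite abse_EFin.
apply: le_trans (_ : _ <= \int[P]_x (L * \sum_(a < n) `|h a x|)%:E)%E _.
  apply: ae_ge0_le_integral => //.
  - exact/measurable_EFinP.
  - by move=> x _; rewrite lee_fin mulr_ge0 ?sumr_ge0.
  - by apply/measurable_EFinP/measurable_funM => //; apply: measurable_sum.
  by apply: filterS fg_le => x fg_le_x _; rewrite lee_fin.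
under eq_integral => x _ do rewrite EFinM -sumEFin.
rewrite ge0_integralZl_EFin //; last 2 first.
- by move=> x _; rewrite sume_ge0.
- by apply: emeasurable_sum => a; apply/measurable_EFinP.
rewrite ge0_integral_sum //; last by move=> a; apply/measurable_EFinP.
rewrite EFinM -muleA lee_wpmul2l ?lee_fin // mule_natl.
apply: le_trans (_ : _ <= \sum_(a < n) \big[maxe/0]_(b < n) L1norm P (h b))%E _.
  apply: lee_sum => a _.
  exact: (le_bigmax _ (fun a => L1norm P (h a)) a).
by rewrite sumr_const card_ord.
Qed.

End Probability.

Section OptimalCodebook.
Context {R : realType} {p k : nat} {d : measure_display} {T : measurableType d}.
Variables (P : probability T R) (mu : 'I_p -> T -> R) (M : R).
Hypothesis mu_meas : forall a, measurable_fun setT (mu a).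
Hypothesis mu_box : {ae P, forall x a, `|mu a x| <= M}.
Implicit Type C : @codebook R p k.

Lemma in_Ck_replace C j0 x : in_Ck mu C -> (forall j, C j <> vecf mu x) ->
  in_Ck mu (fun j => if j == j0 then vecf mu x else C j).
Proof.
move=> [C_inj C_img] x_notin_C; split; last first.
  by move=> j; case: eqP => _; [exists x | exact: C_img].
move=> i j; do 2 case: eqP => [->|_] //.
- by move=> /esym /x_notin_C.
- by move=> /x_notin_C.
- exact: C_inj.
Qed.

Lemma risk_le_center_in_box C j : (forall i, `|C j 0 i| <= M) ->
  (risk P mu C <= (p%:R * (2 * M) ^+ 2)%:E)%E.
Proof.
move=> CjM; apply: integral_le_ae_bound.
- exact: measurable_fC_vecf.
- by move=> x; apply: fC_ge0.
- by rewrite mulr_ge0 ?sqr_ge0.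
apply: filterS mu_box => x xM; apply: le_trans (fC_le_dist2 C _ j) _.
apply: dist2_le_box => i; rewrite mxE (le_trans (ler_normB _ _)) //.
by have := xM i; have := CjM i; lra.
Qed.

Lemma optimal_risk_le C : (0 < k)%N -> optimal P mu C ->
  (risk P mu C <= (p%:R * (2 * M) ^+ 2)%:E)%E.
Proof.
move=> k_gt0 [C_Ck C_opt]; have [x xM] := ae_exists P mu_box.
have mux_box i : `|vecf mu x 0 i| <= M by rewrite mxE.
have [[j Cj]|x_notin_C] := pselect (exists j, C j = vecf mu x).
  by apply: (risk_le_center_in_box C j); rewrite Cj.
pose j0 := Ordinal k_gt0.
have C'_Ck :=
  in_Ck_replace C j0 x C_Ck (fun j Cj => x_notin_C (ex_intro _ j Cj)).
apply: le_trans (C_opt _ C'_Ck) _; apply: (risk_le_center_in_box _ j0).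
by rewrite eqxx.
Qed.

Lemma optimal_center_near C : (0 < k)%N -> optimal P mu C ->
  exists j, forall i, `|C j 0 i| <= center_radius p M.
Proof.
move=> k_gt0 C_opt; set E := p%:R * (2 * M) ^+ 2.
have E_ge0 : 0 <= E by rewrite mulr_ge0 ?sqr_ge0.
have [x [xM fCx_lt]] :
    exists x, (forall a, `|mu a x| <= M) /\ fC C (vecf mu x) < E + 1.
  apply: (ae_witness_integral_lt P _ _ (E + 1) mu_box).
  - exact: measurable_fC_vecf.
  - by move=> x; apply: fC_ge0.
  - by rewrite addr_ge0.
  apply: le_lt_trans (optimal_risk_le C k_gt0 C_opt) _.
  by rewrite lte_fin ltrDl.
have [j fCx] := fC_nearest C (vecf mu x) k_gt0.
exists j => i; have := sqr_coord_le_dist2 (vecf mu x) (C j) i.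
rewrite -fCx mxE => sqr_le.
have := normr_le_1_sqr (mu i x - C j 0 i).
have := ler_normB (mu i x) (mu i x - C j 0 i); rewrite opprB addrC subrK.
by have := xM i; rewrite /center_radius -/E; lra.
Qed.

Lemma ae_fC_vecf_lipschitz C (muhat : 'I_p -> T -> R) : 0 <= M ->
  optimal P mu C -> {ae P, forall x a, `|muhat a x| <= M} ->
  {ae P, forall x, `|fC C (vecf muhat x) - fC C (vecf mu x)|
                   <= fC_lipschitz_const p M * \sum_(a < p) `|muhat a x - mu a x|}.
Proof.
move=> M_ge0 C_opt muhat_box; have [k0|k_gt0] := posnP k.
  apply: aeW => x; rewrite !fC_ord0 // subrr normr0.
  by rewrite mulr_ge0 ?sumr_ge0 ?fC_lipschitz_const_ge0.
have [j Cj] := optimal_center_near C k_gt0 C_opt.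
apply: filterS2 mu_box muhat_box => x mux muhatx.
have -> : \sum_(a < p) `|muhat a x - mu a x|
    = \sum_(i < p) `|vecf muhat x 0 i - vecf mu x 0 i|.
  by apply: eq_bigr => i _; rewrite !mxE.
apply: fC_lipschitz => // [i|i||]; rewrite ?mxE //.
all: by apply: fC_le_box Cj _ => i; rewrite mxE.
Qed.

End OptimalCodebook.

Theorem lemmaA3 (R : realType) (p k : nat) (B alpha cm : R) :
  0 < alpha ->
  exists K : R, 0 < K /\
  forall (d : measure_display) (T : measurableType d) (P : probability T R)
    (mu muhat : 'I_p -> T -> R) (kappa : R) (Cs : @codebook R p k),
    (forall a, measurable_fun setT (mu a)) ->
    (forall a, measurable_fun setT (muhat a)) ->
    {ae P, forall x, forall a, `|mu a x| <= B} ->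
    {ae P, forall x, forall a, `|muhat a x| <= B} ->
    0 < kappa ->
    @margin_condition R p k d T P mu kappa alpha cm ->
    optimal P mu Cs ->
    (`| \int[P]_x ((fC Cs (vecf muhat x))%:E - (fC Cs (vecf mu x))%:E) |
      <= K%:E *
         (\big[maxe/0]_(a < p) L1norm P (fun x => (muhat a x - mu a x)%R)
          + \big[maxe/0]_(a < p)
              poweR (Linfnorm P (fun x => (muhat a x - mu a x)%R)) (alpha + 1)
          + (kappa^-1)%:E *
            \big[maxe/0]_(a < p)
              (Linfnorm P (fun x => (muhat a x - mu a x)%R)
               * L1norm P (fun x => (muhat a x - mu a x)%R))))%E.
Proof.
move=> _; set M := `|B|; have M_ge0 : 0 <= M := normr_ge0 B.
set L := fC_lipschitz_const p M.
have L_ge0 : 0 <= L := fC_lipschitz_const_ge0 p M M_ge0.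
have Lp_ge0 : 0 <= L * p%:R by rewrite mulr_ge0.
exists (L * p%:R + 1); split; first by rewrite ltr_wpDl.
move=> d T P mu muhat kappa Cs mu_meas muhat_meas mu_B muhat_B kappa_gt0 _ Cs_opt.
have box (m : 'I_p -> T -> R) :
    {ae P, forall x a, `|m a x| <= B} -> {ae P, forall x a, `|m a x| <= M}.
  by apply: filterS => x mxB a; apply: le_trans (mxB a) (ler_norm B).
have lip := ae_fC_vecf_lipschitz P mu M mu_meas (box _ mu_B) Cs muhat M_ge0 Cs_opt
  (box _ muhat_B).
apply: le_trans (abse_integral_subr_le P _ _ _ _ _ _ _ _ L_ge0 lip) _.
- exact: measurable_fC_vecf.
- exact: measurable_fC_vecf.
- by move=> a; apply: measurable_funB.
rewrite -addeA.
apply: le_trans (_ : _ <= (L * p%:R + 1)%:E * _)%E (lee_wpmul2l _ (leeDl _ _)).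
- by rewrite lee_wpmul2r ?bigmax_ge_id // lee_fin lerDl.
- by rewrite lee_fin addr_ge0.
apply: adde_ge0; first exact: bigmax_ge_id.
by apply: mule_ge0; [rewrite lee_fin invr_ge0 ltW | exact: bigmax_ge_id].
Qed.
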